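(* Let $\mathbb H$ be the real quaternion algebra. Let $a,d\in\mathbb H$ be nonzero with $\Re(a)=0$ and $ad=-da$, let $m,n\in\mathbb R$, and let $f(z)=z^2+az+m+na+d$. Let $z_0$ be a root of $f$ (i.e. $z_0^2+az_0+m+na+d=0$), and let $r_0=\Re(z_0)$, $N_0=-\Im(z_0)^2$. If $n\neq0$, then $r_0$ is a root of $16r^6+(-8a^2+16m)r^4+(-a^2(4m-a^2)+4a^2n^2+4d^2)r^2-a^4n^2=0$ and $\Im(z_0)=-(2r_0+a)^{-1}\left(\frac{1}{2r_0}a(r_0+n)(2r_0+a)+d\right)$. If $n=0$, then either $r_0=0$, $N_0$ is a root of $N^2+(a^2-2m)N+m^2-d^2=0$ and $\Im(z_0)=-a^{-1}(m+d-N_0)$; or $r_0$ is a root of $16r^4+(-8a^2+16m)r^2-a^2(4m-a^2)+4d^2=0$ and $\Im(z_0)=-(2r_0+a)^{-1}\left(\frac12a(2r_0+a)+d\right)$.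
   Context: For $q=c_1+c_2i+c_3j+c_4k\in\mathbb H$, $\Re(q)=c_1$ and $\Im(q)=q-\Re(q)$. Under the hypotheses $a$ and $d$ are pure imaginary, so $a^2,d^2\in\mathbb R$. *)

From mathcomp Require Import all_boot all_order all_algebra.
From mathcomp Require Import reals.
Set Implicit Arguments. Unset Strict Implicit. Unset Printing Implicit Defensive.
Import Order.TTheory GRing.Theory Num.Theory.
Local Open Scope ring_scope.

(* q = c1 + c2 i + c3 j + c4 k *)
Record quat (R : Type) := Quat { qc1 : R; qc2 : R; qc3 : R; qc4 : R }.

Section Quat.
Variable R : realType.

Definition qreal (c : R) : quat R := Quat c 0 0 0.
Definition qzero : quat R := qreal 0.
Definition qone : quat R := qreal 1.

Definition qadd (p q : quat R) : quat R :=
  Quat (qc1 p + qc1 q) (qc2 p + qc2 q) (qc3 p + qc3 q) (qc4 p + qc4 q).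
Definition qopp (p : quat R) : quat R :=
  Quat (- qc1 p) (- qc2 p) (- qc3 p) (- qc4 p).
Definition qsub (p q : quat R) : quat R := qadd p (qopp q).

(* Hamilton product: i^2 = j^2 = k^2 = ijk = -1 *)
Definition qmul (p q : quat R) : quat R :=
  Quat (qc1 p * qc1 q - qc2 p * qc2 q - qc3 p * qc3 q - qc4 p * qc4 q)
       (qc1 p * qc2 q + qc2 p * qc1 q + qc3 p * qc4 q - qc4 p * qc3 q)
       (qc1 p * qc3 q - qc2 p * qc4 q + qc3 p * qc1 q + qc4 p * qc2 q)
       (qc1 p * qc4 q + qc2 p * qc3 q - qc3 p * qc2 q + qc4 p * qc1 q).

Definition qnorm2 (p : quat R) : R :=
  qc1 p ^+ 2 + qc2 p ^+ 2 + qc3 p ^+ 2 + qc4 p ^+ 2.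

(* inverse: conj(p) / |p|^2 (only used at nonzero arguments) *)
Definition qinv (p : quat R) : quat R :=
  let s := (qnorm2 p)^-1 in
  Quat (qc1 p * s) (- qc2 p * s) (- qc3 p * s) (- qc4 p * s).

Definition qexp (p : quat R) (n : nat) : quat R := iter n (qmul p) qone.

Definition qRe (p : quat R) : R := qc1 p.
Definition qIm (p : quat R) : quat R := qsub p (qreal (qRe p)).

End Quat.

From mathcomp Require Import all_boot all_order all_algebra.
From mathcomp Require Import reals.
From mathcomp Require Import ring lra.
Set Implicit Arguments. Unset Strict Implicit. Unset Printing Implicit Defensive.
Import Order.TTheory GRing.Theory Num.Theory.
Local Open Scope ring_scope.

(* Write z0 = r + v with v pure. Since a is pure and anticommutes with d, d is
   pure and orthogonal to a. The real and imaginary parts of f(z0) = 0 read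
   m = <a,v> + |v|^2 - r^2 and (2r + a) v = -(<a,v> + (r + n) a + d).
   Dotting the second with a gives 2r<a,v> + (r + n)|a|^2 = 0, and taking norms
   (the norm is multiplicative) gives
   (4r^2 + |a|^2)|v|^2 = <a,v>^2 + (r + n)^2 |a|^2 + |d|^2.
   Eliminating <a,v> and |v|^2 from these three real relations yields the sextic
   in r (a quartic when n = 0, and a quadratic in N0 = |v|^2 when r = 0), while
   solving the vector equation for v, with <a,v> rewritten through a^2 = -|a|^2,
   gives Im(z0). *)

Section QuatAlgebra.
Variable R : realType.
Implicit Types (p q w : quat R) (s t : R).

Definition qdot p q : R := qc2 p * qc2 q + qc3 p * qc3 q + qc4 p * qc4 q.

Lemma qreal_add s t : qadd (qreal s) (qreal t) = qreal (s + t).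
Proof. by rewrite /qadd /=; congr Quat; ring. Qed.

Lemma qreal_opp s : qopp (qreal s) = qreal (- s).
Proof. by rewrite /qopp /=; congr Quat; ring. Qed.

Lemma qreal_sub s t : qsub (qreal s) (qreal t) = qreal (s - t).
Proof. by rewrite /qsub qreal_opp qreal_add. Qed.

Lemma qreal_mul s t : qmul (qreal s) (qreal t) = qreal (s * t).
Proof. by rewrite /qmul /=; congr Quat; ring. Qed.

Lemma qreal_inv s : qinv (qreal s) = qreal s^-1.
Proof.
rewrite /qinv /qnorm2 /=; have [->|s0] := eqVneq s 0.
  by rewrite invr0; congr Quat; ring.
by congr Quat; field.
Qed.

Lemma qreal_exp s k : qexp (qreal s) k = qreal (s ^+ k).
Proof.
elim: k => [|k IHk]; first by rewrite expr0.
by rewrite /qexp iterS -/(qexp _ k) IHk qreal_mul exprS.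
Qed.

Definition qrealE := (qreal_add, qreal_sub, qreal_opp, qreal_mul, qreal_inv, qreal_exp).

Lemma qmul_realC c p s : qmul (qmul (qreal c) p) (qreal s) = qmul (qreal (c * s)) p.
Proof. by case: p => *; rewrite /qmul /=; congr Quat; ring. Qed.

Lemma qaddA p q w : qadd p (qadd q w) = qadd (qadd p q) w.
Proof. by rewrite /qadd /=; congr Quat; ring. Qed.

Lemma qexp4 p : qexp p 4 = qexp (qexp p 2) 2.
Proof. by rewrite /qexp /qmul /=; congr Quat; ring. Qed.

Lemma qnorm2_mul p q : qnorm2 (qmul p q) = qnorm2 p * qnorm2 q.
Proof. by rewrite /qnorm2 /qmul /=; ring. Qed.

Lemma qnorm2_opp p : qnorm2 (qopp p) = qnorm2 p.
Proof. by rewrite /qnorm2 /qopp /= !sqrrN. Qed.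

Lemma qnorm2_gt0 p : p <> qzero R -> 0 < qnorm2 p.
Proof.
case: p => p1 p2 p3 p4 p0; rewrite /qnorm2 /= lt_def.
rewrite !addr_ge0 ?sqr_ge0 // andbT.
apply/negP; rewrite !paddr_eq0 ?addr_ge0 ?sqr_ge0 // !sqrf_eq0 -!andbA.
by case/and4P => /eqP h1 /eqP h2 /eqP h3 /eqP h4; apply: p0; rewrite h1 h2 h3 h4.
Qed.

Lemma qmul_eq_oppE q p w :
  qnorm2 q != 0 -> qmul q p = qopp w -> p = qopp (qmul (qinv q) w).
Proof.
case: q p w => q1 q2 q3 q4 [p1 p2 p3 p4] [w1 w2 w3 w4].
rewrite /qnorm2 /qmul /qopp /qinv /= => q0 [e1 e2 e3 e4].
rewrite -[w1]opprK -[w2]opprK -[w3]opprK -[w4]opprK -e1 -e2 -e3 -e4.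
by rewrite /qnorm2 /=; congr Quat; field.
Qed.

Lemma qIm_pure p : qRe (qIm p) = 0.
Proof. by rewrite /qRe /qIm /qsub /qadd /= subrr. Qed.

Lemma qnorm2_pure p : qRe p = 0 -> qnorm2 p = qdot p p.
Proof. by case: p => p1 p2 p3 p4; rewrite /qnorm2 /qdot /qRe /= => ->; ring. Qed.

Lemma qnorm2_real_add_pure s p : qRe p = 0 -> qnorm2 (qadd (qreal s) p) = s ^+ 2 + qdot p p.
Proof. by case: p => p1 p2 p3 p4; rewrite /qnorm2 /qdot /qRe /= => ->; ring. Qed.

Lemma qsqr_pure p : qRe p = 0 -> qexp p 2 = qreal (- qdot p p).
Proof.
by case: p => p1 p2 p3 p4; rewrite /qexp /qmul /qdot /qRe /= => ->; congr Quat; ring.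
Qed.

Lemma qmul_pure_affine a k t : qRe a = 0 ->
  qmul (qmul (qreal k) a) (qadd (qreal t) a)
  = qadd (qreal (- (k * qdot a a))) (qmul (qreal (k * t)) a).
Proof.
by case: a => a1 a2 a3 a4; rewrite /qmul /qadd /qdot /qRe /= => ->; congr Quat; ring.
Qed.

Lemma anticomm_pure a d : a <> qzero R -> qRe a = 0 ->
  qmul a d = qopp (qmul d a) -> qRe d = 0 /\ qdot a d = 0.
Proof.
move=> a0 a_pure; have := qnorm2_gt0 a0; rewrite qnorm2_pure //.
case: a a0 a_pure => a1 a2 a3 a4 _; case: d => d1 d2 d3 d4.
rewrite /qmul /qopp /qdot /qRe /= => -> a_gt0 [e1 e2 e3 e4]; split; last by lra.
apply: (mulIf (lt0r_neq0 a_gt0)); rewrite mul0r.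
have : a2 * d1 = 0 /\ a3 * d1 = 0 /\ a4 * d1 = 0 by lra.
move=> [k2 [k3 k4]].
transitivity (a2 * (a2 * d1) + a3 * (a3 * d1) + a4 * (a4 * d1)); first ring.
by rewrite k2 k3 k4; ring.
Qed.

End QuatAlgebra.

Section Resolvents.
Variables (R : idomainType) (r n m alpha delta p N : R).
Hypotheses (re_eq : m = p + N - r ^+ 2) (dot_eq : 2 * r * p + (r + n) * alpha = 0).
Hypothesis norm_eq : (4 * r ^+ 2 + alpha) * N = p ^+ 2 + (r + n) ^+ 2 * alpha + delta.

Let delta_eq : delta = (4 * r ^+ 2 + alpha) * N - p ^+ 2 - (r + n) ^+ 2 * alpha.
Proof. by rewrite norm_eq; ring. Qed.

Lemma resolvent_sextic :
  16 * r ^+ 6 + (8 * alpha + 16 * m) * r ^+ 4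
  + (alpha ^+ 2 + 4 * m * alpha - 4 * alpha * n ^+ 2 - 4 * delta) * r ^+ 2 - alpha ^+ 2 * n ^+ 2 = 0.
Proof.
rewrite re_eq delta_eq.
transitivity ((2 * r * p + (r + n) * alpha)
              * ((4 * r ^+ 2 + alpha) * 2 * r + (2 * r * p + (r + n) * alpha) - 2 * (r + n) * alpha)).
  by ring.
by rewrite dot_eq mul0r.
Qed.

Lemma resolvent_quartic : n = 0 -> r != 0 ->
  16 * r ^+ 4 + (8 * alpha + 16 * m) * r ^+ 2 + alpha ^+ 2 + 4 * m * alpha - 4 * delta = 0.
Proof.
move=> n0 r0; apply: (mulIf (expf_neq0 2 r0)); rewrite mul0r -resolvent_sextic n0.
by ring.
Qed.

Lemma resolvent_quadratic : r = 0 -> N ^+ 2 - (alpha + 2 * m) * N + m ^+ 2 + delta = 0.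
Proof.
move=> r0; move: dot_eq; rewrite re_eq delta_eq r0 => dot0.
transitivity (- n * ((0 + n) * alpha + 2 * 0 * p)); first by ring.
by rewrite addrC dot0 mulr0.
Qed.

End Resolvents.

Section RootOfQuadratic.
Variables (R : realType) (a d z : quat R) (m n : R).
Hypotheses (a_neq0 : a <> qzero R) (a_pure : qRe a = 0) (d_pure : qRe d = 0).
Hypothesis ad_orth : qdot a d = 0.
Hypothesis z_root :
  qadd (qadd (qadd (qadd (qexp z 2) (qmul a z)) (qreal m)) (qmul (qreal n) a)) d = qzero R.

Local Notation r := (qRe z).
Local Notation v := (qIm z).
Local Notation alpha := (qdot a a).

Lemma root_re : m = qdot a v + qdot v v - r ^+ 2.
Proof.
move: a_pure d_pure z_root; case: a d z => [a1 a2 a3 a4] [d1 d2 d3 d4] [z1 z2 z3 z4].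
rewrite /qexp /qadd /qmul /qdot /qIm /qsub /qadd /qopp /qRe /= => -> -> [e1 _ _ _].
lra.
Qed.

Lemma root_im :
  qmul (qadd (qreal (2 * r)) a) v
  = qopp (qadd (qreal (qdot a v)) (qadd (qmul (qreal (r + n)) a) d)).
Proof.
move: a_pure d_pure z_root; case: a d z => [a1 a2 a3 a4] [d1 d2 d3 d4] [z1 z2 z3 z4].
rewrite /qexp /qadd /qmul /qdot /qIm /qsub /qadd /qopp /qRe /= => -> -> [_ e2 e3 e4].
by congr Quat; lra.
Qed.

Lemma root_dot : 2 * r * qdot a v + (r + n) * alpha = 0.
Proof.
move: a_pure d_pure ad_orth root_im; case: a d z => [a1 a2 a3 a4] [d1 d2 d3 d4] [z1 z2 z3 z4].
rewrite /qadd /qmul /qdot /qIm /qsub /qadd /qopp /qRe /= => -> -> ad0 [_ e2 e3 e4].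
have := congr1 ( *%R a2) e2; have := congr1 ( *%R a3) e3; have := congr1 ( *%R a4) e4.
rewrite /=; lra.
Qed.

Lemma root_norm :
  (4 * r ^+ 2 + alpha) * qdot v v = qdot a v ^+ 2 + (r + n) ^+ 2 * alpha + qdot d d.
Proof.
have := congr1 (@qnorm2 R) root_im; rewrite qnorm2_mul qnorm2_opp.
move: ad_orth a_pure d_pure; case: a d z => [a1 a2 a3 a4] [d1 d2 d3 d4] [z1 z2 z3 z4].
rewrite /qnorm2 /qadd /qmul /qdot /qIm /qsub /qadd /qopp /qRe /= => ad0 -> -> h.
have := congr1 ( *%R (2 * (z1 + n))) ad0; rewrite /=; lra.
Qed.

Let alpha_gt0 : 0 < alpha.
Proof. by rewrite -qnorm2_pure // qnorm2_gt0. Qed.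

Lemma root_n_eq0 : r = 0 -> n = 0.
Proof.
move=> r0; have := root_dot; rewrite r0 mulr0 mul0r !add0r => /eqP.
by rewrite mulf_eq0 (gt_eqF alpha_gt0) orbF => /eqP.
Qed.

Lemma root_im_neq0 : r != 0 ->
  v = qopp (qmul (qinv (qadd (qreal (2 * r)) a))
                 (qadd (qmul (qmul (qreal ((2 * r)^-1 * (r + n))) a)
                             (qadd (qreal (2 * r)) a)) d)).
Proof.
move=> r_neq0; apply: qmul_eq_oppE.
  by rewrite qnorm2_real_add_pure // gt_eqF // ltr_wpDl ?sqr_ge0.
have av_eq : qdot a v = - ((2 * r)^-1 * (r + n) * alpha).
  apply/eqP; rewrite -subr_eq0 opprK.
  have -> : qdot a v + (2 * r)^-1 * (r + n) * alpha
            = (2 * r)^-1 * (2 * r * qdot a v + (r + n) * alpha) by field.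
  by rewrite root_dot mulr0.
have rn_eq : r + n = (2 * r)^-1 * (r + n) * (2 * r) by field.
by rewrite root_im qmul_pure_affine // -qaddA -av_eq -rn_eq.
Qed.

Lemma root_im_re0 : r = 0 ->
  v = qopp (qmul (qinv a) (qsub (qadd (qreal m) d) (qreal (qdot v v)))).
Proof.
move=> r0; apply: qmul_eq_oppE; first by rewrite qnorm2_pure // gt_eqF.
move: root_re r0 (root_n_eq0 r0) a_pure d_pure root_im.
case: a d z => [a1 a2 a3 a4] [d1 d2 d3 d4] [z1 z2 z3 z4].
rewrite /qadd /qmul /qdot /qIm /qsub /qadd /qopp /qRe /= => -> -> -> -> -> [e1 e2 e3 e4].
by congr Quat; lra.
Qed.
End RootOfQuadratic.

Theorem mainTheorem18 (R : realType) (a d : quat R) (m n : R) (z0 : quat R) :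
  a <> qzero R -> d <> qzero R ->
  qRe a = 0 ->
  qmul a d = qopp (qmul d a) ->
  (* z0 is a root of f(z) = z^2 + a z + m + n a + d *)
  qadd (qadd (qadd (qadd (qexp z0 2) (qmul a z0)) (qreal m))
             (qmul (qreal n) a)) d = qzero R ->
  let r0 := qRe z0 in
  let N0 := qopp (qexp (qIm z0) 2) in
  let rq := qreal r0 in
  (n <> 0 ->
     qsub
       (qadd (qadd (qmul (qreal 16) (qexp rq 6))
                   (qmul (qadd (qmul (qreal (-8)) (qexp a 2)) (qmul (qreal 16) (qreal m)))
                         (qexp rq 4)))
             (qmul (qadd (qadd (qopp (qmul (qexp a 2)
                                         (qsub (qmul (qreal 4) (qreal m)) (qexp a 2))))
                               (qmul (qmul (qreal 4) (qexp a 2)) (qexp (qreal n) 2)))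
                         (qmul (qreal 4) (qexp d 2)))
                   (qexp rq 2)))
       (qmul (qexp a 4) (qexp (qreal n) 2)) = qzero R
     /\
     qIm z0 =
       qopp (qmul (qinv (qadd (qmul (qreal 2) rq) a))
                  (qadd (qmul (qmul (qmul (qinv (qmul (qreal 2) rq)) a)
                                    (qadd rq (qreal n)))
                              (qadd (qmul (qreal 2) rq) a))
                        d)))
  /\
  (n = 0 ->
     (r0 = 0
      /\ qsub (qadd (qadd (qexp N0 2)
                          (qmul (qsub (qexp a 2) (qmul (qreal 2) (qreal m))) N0))
                    (qexp (qreal m) 2))
              (qexp d 2) = qzero R
      /\ qIm z0 = qopp (qmul (qinv a) (qsub (qadd (qreal m) d) N0)))
     \/
     (qadd (qsub (qadd (qmul (qreal 16) (qexp rq 4))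
                       (qmul (qadd (qmul (qreal (-8)) (qexp a 2)) (qmul (qreal 16) (qreal m)))
                             (qexp rq 2)))
                 (qmul (qexp a 2) (qsub (qmul (qreal 4) (qreal m)) (qexp a 2))))
           (qmul (qreal 4) (qexp d 2)) = qzero R
      /\ qIm z0 =
           qopp (qmul (qinv (qadd (qmul (qreal 2) rq) a))
                      (qadd (qmul (qmul (qinv (qreal 2)) a) (qadd (qmul (qreal 2) rq) a))
                            d)))).
Proof.
move=> a_neq0 _ a_pure ad_anti z_root r0 N0 rq.
have [d_pure ad_orth] := anticomm_pure a_neq0 a_pure ad_anti.
have re_eq := root_re a_pure d_pure z_root.
have dot_eq := root_dot a_pure d_pure ad_orth z_root.
have norm_eq := root_norm a_pure d_pure ad_orth z_root.
have im_neq0 := root_im_neq0 a_neq0 a_pure d_pure ad_orth z_root.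
rewrite {}/N0 {}/rq {}/r0 (qsqr_pure (qIm_pure z0)) !qexp4.
rewrite (qsqr_pure a_pure) (qsqr_pure d_pure) !qrealE.
split=> [n_neq0 | n_eq0].
  have r_neq0 : qRe z0 != 0.
    by apply: contra_notN n_neq0 => /eqP /(root_n_eq0 a_neq0 a_pure d_pure ad_orth z_root).
  split.
    apply: (congr1 (@qreal R)); rewrite -(resolvent_sextic re_eq dot_eq norm_eq); ring.
  by rewrite qmul_realC; apply: im_neq0.
have [r_eq0 | r_neq0] := eqVneq (qRe z0) 0; [left | right].
  split=> //; split.
    apply: (congr1 (@qreal R)); rewrite -(resolvent_quadratic re_eq dot_eq norm_eq r_eq0); ring.
  by rewrite opprK; apply: (root_im_re0 a_neq0 a_pure d_pure ad_orth z_root).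
split.
  apply: (congr1 (@qreal R)); rewrite -(resolvent_quartic re_eq dot_eq norm_eq n_eq0 r_neq0); ring.
have -> : 2^-1 = (2 * qRe z0)^-1 * (qRe z0 + n) :> R by rewrite n_eq0 addr0; field.
exact: im_neq0.
Qed.
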